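(* Let $N$ be a complex two-step nilpotent Lie algebra whose center has dimension $p$, with $q=\dim N-p$. Then $N$ is decomposable if and only if there is a basis $(X,I)$ of $N$ such that the representation tensor $\mathcal A(X,I)$ is in block diagonal format $(S,T)$ for some nonempty proper subset $S\subset\{1,\dots,q\}$ and some subset $T\subseteq\{1,\dots,p\}$.
   Context: A Lie algebra is decomposable if it is the direct sum of two nonzero ideals. A basis $(X,I)$ of $N$ consists of $I=\{\mathbf y_1,\dots,\mathbf y_p\}$, a basis of the center of $N$, and $X=\{\mathbf x_1,\dots,\mathbf x_q\}$ such that $X\cup I$ is a basis of $N$. Its representation tensor $\mathcal A(X,I)=(a_{ijk})\in\mathbb C^{q\times q\times p}$ is defined by $a_{ijk}=\alpha_k$ where $[\mathbf x_i,\mathbf x_j]=\sum_{s=1}^p\alpha_s\mathbf y_s$. A tensor $\mathcal A\in\mathbb C^{q\times q\times p}$ is in block diagonal format $(S,T)$, with $S\subseteq\{1,\dots,q\}$, $T\subseteq\{1,\dots,p\}$, if its only possibly nonzero entries occur at indices $(i,j,k)\in (S\times S\times T)\cup(S^\complement\times S^\complement\times T^\complement)$.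
   Formalization: The center of N is assumed in addition to coincide with its derived algebra [N,N], besides N being two-step nilpotent. The paper assumes this as well. *)

From HB Require Import structures.
From mathcomp Require Import all_boot all_order all_algebra.
From mathcomp Require Import complex.
From mathcomp Require Import Rstruct.
Set Implicit Arguments. Unset Strict Implicit. Unset Printing Implicit Defensive.
Import Order.TTheory GRing.Theory Num.Theory.
Local Open Scope ring_scope.

Definition C : fieldType := complex Rdefinitions.R.

Section Lie.
Variable V : vectType C.
Variable br : V -> V -> V.

Definition lie_algebra : Prop :=
  [/\ (forall (a : C) (x y z : V), br (a *: x + y) z = a *: br x z + br y z),
      (forall (a : C) (x y z : V), br z (a *: x + y) = a *: br z x + br z y),
      (forall x : V, br x x = 0) &
      (forall x y z : V, br x (br y z) + br y (br z x) + br z (br x y) = 0)].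

Definition central (v : V) : Prop := forall x : V, br v x = 0.

Definition derived : {vspace V} :=
  (\sum_(i < \dim {:V}) \sum_(j < \dim {:V})
      <[br (vbasis {:V})`_i (vbasis {:V})`_j]>)%VS.

Definition two_step : Prop := forall x y z : V, br (br x y) z = 0.

Definition ideal (A : {vspace V}) : Prop :=
  forall a x : V, a \in A -> br a x \in A.

Definition decomposable : Prop :=
  exists A B : {vspace V},
    [/\ A != 0%VS, B != 0%VS, ideal A /\ ideal B,
        (A + B)%VS = fullv & (A :&: B)%VS = 0%VS].

Definition center_basis (I : seq V) : Prop :=
  free I /\ forall v : V, v \in <<I>>%VS <-> central v.

Definition XI_basis q p (X : q.-tuple V) (I : p.-tuple V) : Prop :=
  center_basis I /\ basis_of fullv (X ++ I).

Definition rep_tensor q p (X : q.-tuple V) (I : p.-tuple V)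
  (i j : 'I_q) (k : 'I_p) : C := coord I k (br (tnth X i) (tnth X j)).

End Lie.

Definition block_diag q p (A : 'I_q -> 'I_q -> 'I_p -> C)
  (S : {set 'I_q}) (T : {set 'I_p}) : Prop :=
  forall i j k, A i j k != 0 ->
    [&& i \in S, j \in S & k \in T] || [&& i \notin S, j \notin S & k \notin T].

(** If [N = A (+) B] with [A], [B] nonzero ideals, then [[A, B] = 0], so the components
    of a central vector are central and [Z = (A :&: Z) (+) (B :&: Z)].  Neither summand is
    central: if [A] were, every bracket would lie in [B], whence [A <= Z <= [N, N] <= B]
    and [A = 0].  Bases of [A :\: Z], [B :\: Z] (the [X]-part) and of [A :&: Z],
    [B :&: Z] (the [I]-part) then put [A(X, I)] in block diagonal format, [S] and [T]
    being the indices of the basis vectors lying in [A].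
    Conversely, for a format [(S, T)] the spans of [X_S, I_T] and of [X_S^c, I_T^c] are
    ideals because brackets are central, and they are complementary because [(X, I)] is
    a basis. *)
From mathcomp Require Import zify.
From mathcomp Require Import all_boot all_algebra.
Set Implicit Arguments. Unset Strict Implicit. Unset Printing Implicit Defensive.
Import GRing.Theory.
Local Open Scope ring_scope.

Section Spans.
Variables (K : fieldType) (V : vectType K).

Lemma scalar_span_eq0 (f : {scalar V}) (u : seq V) v :
  {in u, forall x, f x = 0} -> v \in <<u>>%VS -> f v = 0.
Proof.
move=> fu0 /(@coord_span _ _ _ (in_tuple u)) ->.
by rewrite linear_sum big1 // => i _; rewrite linearZ /= fu0 ?mulr0 // mem_nth.
Qed.

Lemma coord_span_image n (X : n.-tuple V) (T : {set 'I_n}) k v :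
  free X -> v \in <<[seq tnth X l | l in T]>>%VS -> k \notin T -> coord X k v = 0.
Proof.
move=> freeX vT kT; apply: scalar_span_eq0 vT => _ /imageP [l lT ->] /=.
rewrite (tnth_nth 0) coord_free //; case: eqP => [lk | _]; last exact: mulr0n.
by move: lT; rewrite lk (negbTE kT).
Qed.

Lemma span_image_coord n (X : n.-tuple V) (T : {set 'I_n}) v :
  v \in <<X>>%VS -> (forall k, k \notin T -> coord X k v = 0) ->
  v \in <<[seq tnth X k | k in T]>>%VS.
Proof.
move=> vX suppT; rewrite (coord_span vX); apply: memv_suml => k _.
have [kT | kT] := boolP (k \in T); last by rewrite suppT // scale0r mem0v.
by apply/memvZ/memv_span; rewrite -tnth_nth image_f.
Qed.

Lemma span_sub_image n (X : n.-tuple V) (T : {set 'I_n}) (u : seq V) :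
  {subset u <= X} -> (forall k, tnth X k \in u -> k \in T) ->
  (<<u>> <= <<[seq tnth X k | k in T]>>)%VS.
Proof.
move=> uX uT; apply/span_subvP => x xu; have /tnthP [k xk] := uX x xu.
by apply: memv_span; rewrite xk image_f // uT // -xk.
Qed.

Lemma exists_mem_vbasis (U : {vspace V}) : U != 0%VS -> exists x, x \in vbasis U.
Proof.
by rewrite -dimv_eq0 -lt0n => U0; exists (vbasis U)`_0; rewrite mem_nth ?size_tuple.
Qed.

Lemma mem_vbasis_diffv (U W : {vspace V}) x : x \in vbasis (U :\: W) -> x \in U.
Proof. by move/vbasis_mem; apply: subvP; apply: diffvSl. Qed.

Lemma mem_vbasis_capv (U W : {vspace V}) x : x \in vbasis (U :&: W) -> x \in U.
Proof. by move/vbasis_mem; apply: subvP; apply: capvSl. Qed.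

Lemma basis_diffv_capv (A B Z : {vspace V}) :
  (A + B = fullv)%VS -> (A :&: B = 0)%VS ->
  basis_of fullv ((vbasis (A :\: Z) ++ vbasis (B :\: Z)) ++
                  (vbasis (A :&: Z) ++ vbasis (B :&: Z))).
Proof.
move=> AB_full AB0; rewrite basisEdim !size_cat !size_tuple; apply/andP; split.
  rewrite !span_cat !(span_basis (vbasisP _)) (Monoid.mulmACA addv) /=.
  by rewrite !addv_diff_cap AB_full.
rewrite -AB_full dimv_disjoint_sum // -(dimv_cap_compl A Z) -(dimv_cap_compl B Z).
lia.
Qed.

Section BlockSpan.
Variables (q p : nat) (X : q.-tuple V) (I : p.-tuple V).
Implicit Types (S : {set 'I_q}) (T : {set 'I_p}).

Definition block_span (S : {set 'I_q}) (T : {set 'I_p}) : {vspace V} :=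
  <<[seq tnth X i | i in S] ++ [seq tnth I k | k in T]>>%VS.

Lemma mem_block_spanX S T i : i \in S -> tnth X i \in block_span S T.
Proof. by move=> iS; apply: memv_span; rewrite mem_cat image_f. Qed.

Lemma mem_block_spanI S T k : k \in T -> tnth I k \in block_span S T.
Proof. by move=> kT; apply: memv_span; rewrite mem_cat image_f ?orbT. Qed.

Lemma addv_block_spanC S T :
  (block_span S T + block_span (~: S) (~: T))%VS = <<X ++ I>>%VS.
Proof.
apply/eqP; rewrite eqEsubv subv_add -andbA; apply/and3P; split; last first.
  apply/span_subvP => _ /[!mem_cat] /orP [] /tnthP [i ->].
    have [iS | iS] := boolP (i \in S).
      by apply: subvP (addvSl _ _) _ _; apply: mem_block_spanX.
    by apply: subvP (addvSr _ _) _ _; apply: mem_block_spanX; rewrite inE.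
  have [iT | iT] := boolP (i \in T).
    by apply: subvP (addvSl _ _) _ _; apply: mem_block_spanI.
  by apply: subvP (addvSr _ _) _ _; apply: mem_block_spanI; rewrite inE.
all: apply/span_subvP => _ /[!mem_cat] /orP [] /imageP [i _ ->];
  by apply: memv_span; rewrite mem_cat mem_tnth ?orbT.
Qed.

Lemma dim_block_span S T : (\dim (block_span S T) <= #|S| + #|T|)%N.
Proof. by rewrite -(size_image (tnth X)) -(size_image (tnth I)) -size_cat dim_span. Qed.

Lemma capv_block_spanC S T :
  free (X ++ I) -> (block_span S T :&: block_span (~: S) (~: T) = 0)%VS.
Proof.
move=> freeXI; apply/eqP; rewrite -dimv_eq0.
have := dimv_sum_cap (block_span S T) (block_span (~: S) (~: T)).
rewrite addv_block_spanC (eqnP freeXI) size_cat !size_tuple.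
have := dim_block_span S T; have := dim_block_span (~: S) (~: T).
have := cardsC S; have := cardsC T; rewrite !card_ord; lia.
Qed.

End BlockSpan.

End Spans.

Section LieAlgebra.
Variables (V : vectType C) (br : V -> V -> V).
Hypothesis lieV : lie_algebra br.

Lemma brDl x y z : br (x + y) z = br x z + br y z.
Proof. by case: lieV => linl _ _ _; have := linl 1 x y z; rewrite !scale1r. Qed.

Lemma brDr x y z : br z (x + y) = br z x + br z y.
Proof. by case: lieV => _ linr _ _; have := linr 1 x y z; rewrite !scale1r. Qed.

Lemma br0l z : br 0 z = 0.
Proof. by apply: (addrI (br 0 z)); rewrite addr0 -brDl addr0. Qed.

Lemma br0r z : br z 0 = 0.
Proof. by apply: (addrI (br z 0)); rewrite addr0 -brDr addr0. Qed.

Lemma brZl a x z : br (a *: x) z = a *: br x z.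
Proof. by case: lieV => linl _ _ _; have := linl a x 0 z; rewrite !addr0 br0l addr0. Qed.

Lemma brZr a x z : br z (a *: x) = a *: br z x.
Proof. by case: lieV => _ linr _ _; have := linr a x 0 z; rewrite !addr0 br0r addr0. Qed.

Lemma br_anticomm x y : br x y = - br y x.
Proof.
case: lieV => _ _ alt _; apply/eqP; rewrite -addr_eq0.
by have := alt (x + y); rewrite brDl !brDr !alt add0r addr0 => ->.
Qed.

Lemma br_suml J r (P : pred J) (F : J -> V) z :
  br (\sum_(j <- r | P j) F j) z = \sum_(j <- r | P j) br (F j) z.
Proof. exact: (big_morph (br^~ z) (fun x y => brDl x y z) (br0l z)). Qed.

Lemma br_sumr J r (P : pred J) (F : J -> V) z :
  br z (\sum_(j <- r | P j) F j) = \sum_(j <- r | P j) br z (F j).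
Proof. exact: (big_morph (br z) (fun x y => brDr x y z) (br0r z)). Qed.

Lemma ideal_span (gs bs : seq V) :
  <<bs>>%VS = fullv -> (forall g b, g \in gs -> b \in bs -> br g b \in <<gs>>%VS) ->
  ideal br <<gs>>%VS.
Proof.
move=> bs_full gs_bs a x /(@coord_span _ _ _ (in_tuple gs)) ->.
have : x \in <<bs>>%VS by rewrite bs_full memvf.
move=> /(@coord_span _ _ _ (in_tuple bs)) ->.
rewrite br_suml; apply: memv_suml => i _; rewrite brZl br_sumr.
apply/memvZ/memv_suml => j _; rewrite brZr.
by apply/memvZ/gs_bs; apply: mem_nth.
Qed.

Section Ideals.
Variables A B : {vspace V}.
Hypotheses (idA : ideal br A) (idB : ideal br B) (AB0 : (A :&: B = 0)%VS).

Lemma br_ideals_eq0 a b : a \in A -> b \in B -> br a b = 0.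
Proof.
move=> aA bB; apply/eqP; rewrite -memv0 -AB0 memv_cap idA //=.
by rewrite br_anticomm memvN idB.
Qed.

Lemma central_ideal_component a b :
  a \in A -> b \in B -> central br (a + b) -> central br a.
Proof.
move=> aA bB cab x; apply/eqP; rewrite -memv0 -AB0 memv_cap idA //=.
have /eqP : br a x + br b x = 0 by rewrite -brDl cab.
by rewrite addr_eq0 => /eqP ->; rewrite memvN idB.
Qed.

End Ideals.

Section Decomposition.
Variables A B : {vspace V}.
Hypotheses (idA : ideal br A) (idB : ideal br B).
Hypotheses (AB_full : (A + B = fullv)%VS) (AB0 : (A :&: B = 0)%VS).

Lemma center_split (Z : {vspace V}) :
  (forall v, v \in Z <-> central br v) -> ((A :&: Z) + (B :&: Z) = Z)%VS.
Proof.
move=> memZ; apply/eqP; rewrite eqEsubv subv_add !capvSr /=.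
apply/subvP => v vZ; have : v \in (A + B)%VS by rewrite AB_full memvf.
case/memv_addP => a aA [b bB vab]; rewrite vab memv_add // memv_cap ?aA ?bB /=.
  by apply/memZ/(central_ideal_component idA idB AB0 aA bB); rewrite -vab; apply/memZ.
apply/memZ/(central_ideal_component idB idA _ bB aA); first by rewrite capvC.
by rewrite addrC -vab; apply/memZ.
Qed.

Lemma central_ideal_eq0 :
  (forall v, central br v -> v \in derived br) ->
  {in A, forall a, central br a} -> A = 0%VS.
Proof.
move=> center_derived centralA.
have brB x y : br x y \in B.
  have : x \in (A + B)%VS by rewrite AB_full memvf.
  by case/memv_addP => a aA [b bB ->]; rewrite brDl centralA // add0r idB.
have derivedB : (derived br <= B)%VS.
  by apply/subv_sumP => i _; apply/subv_sumP => j _; rewrite -memvE brB.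
apply/eqP; rewrite -subv0 -AB0 subv_cap subvv /=.
by apply/subvP => a aA; apply/(subvP derivedB)/center_derived/centralA.
Qed.

Lemma ideal_summand_noncentral (Z : {vspace V}) :
  (forall v, v \in Z <-> central br v) ->
  (forall v, central br v -> v \in derived br) ->
  A != 0%VS -> (A :\: Z != 0)%VS.
Proof.
move=> memZ center_derived; rewrite diffv_eq0; apply: contra => AZ.
by apply/eqP/(central_ideal_eq0 center_derived) => a /(subvP AZ) /memZ.
Qed.

End Decomposition.

Hypothesis two_stepV : two_step br.

Lemma br_center_span p (I : p.-tuple V) x y :
  center_basis br I -> br x y \in <<I>>%VS.
Proof. by case=> _ spanI; apply/spanI => z; apply: two_stepV. Qed.

Section BlockDiagonal.
Variables (q p : nat) (X : q.-tuple V) (I : p.-tuple V).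
Hypothesis XI : XI_basis br X I.
Implicit Types (S : {set 'I_q}) (T : {set 'I_p}).

Lemma ideal_block_span S T :
  (forall i j k, i \in S -> rep_tensor br X I i j k != 0 -> k \in T) ->
  ideal br (block_span X I S T).
Proof.
case: XI => -[_ spanI] /span_basis XI_full suppT.
have centralI v : v \in I -> central br v.
  by move=> vI; apply/spanI/memv_span.
apply: (ideal_span XI_full) => g b /[!mem_cat] /orP [] /imageP [i iS ->] bXI; last first.
  by rewrite centralI ?mem_tnth ?mem0v.
case/orP: bXI => [/tnthP [j ->] | bI]; last first.
  by rewrite br_anticomm centralI // oppr0 mem0v.
rewrite /block_span span_cat; apply: subvP (addvSr _ _) _ _.
apply: span_image_coord => [|k kT]; first exact: br_center_span XI.1.
by apply/eqP; apply: contraNT kT; apply: suppT.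
Qed.

Lemma block_diag_decomposable S T :
  S != set0 -> S != setT -> block_diag (rep_tensor br X I) S T -> decomposable br.
Proof.
move=> S0 ST diagST; case: XI => _ basisXI.
have nzX i : tnth X i != 0.
  by apply: free_not0 (basis_free basisXI) _; rewrite mem_cat mem_tnth.
have [s sS] := set0Pn _ S0.
have [t _ tS] : exists2 t, t \in setT & t \notin S.
  by apply/subsetPn; move: ST; rewrite eqEsubset subsetT.
exists (block_span X I S T), (block_span X I (~: S) (~: T)); split.
- by apply: contraNneq (nzX s) => A0; rewrite -memv0 -A0 mem_block_spanX.
- by apply: contraNneq (nzX t) => B0; rewrite -memv0 -B0 mem_block_spanX ?inE.
- split; apply: ideal_block_span => i j k; rewrite ?inE => iS;
    by move=> /diagST /orP [] /and3P [iS' _ kT] //; case: (i \in S) iS iS'.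
- by rewrite addv_block_spanC (span_basis basisXI).
- exact/capv_block_spanC/(basis_free basisXI).
Qed.

End BlockDiagonal.

Lemma block_diag_rep_tensor q p (X : q.-tuple V) (I : p.-tuple V) (A B : {vspace V})
    (S : {set 'I_q}) (T : {set 'I_p}) :
  center_basis br I -> ideal br A -> ideal br B -> (A :&: B = 0)%VS ->
  (forall i, tnth X i \in (if i \in S then A else B)) ->
  (A :&: <<I>> <= <<[seq tnth I k | k in T]>>)%VS ->
  (B :&: <<I>> <= <<[seq tnth I k | k in ~: T]>>)%VS ->
  block_diag (rep_tensor br X I) S T.
Proof.
move=> centerI idA idB AB0 XAB AZ_T BZ_T i j k; rewrite /rep_tensor.
have freeI : free I by case: centerI.
have brI := br_center_span _ _ centerI.
have := XAB i; have := XAB j; case: (i \in S); case: (j \in S) => /= xj xi.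
- apply: contraR => /norP [kT _]; apply/eqP; apply: (coord_span_image freeI _ kT).
  by apply: (subvP AZ_T); rewrite memv_cap brI idA.
- by rewrite (br_ideals_eq0 idA idB AB0 xi xj) linear0 eqxx.
- by rewrite capvC in AB0; rewrite (br_ideals_eq0 idB idA AB0 xi xj) linear0 eqxx.
- apply: contraR => kT; apply/eqP; apply: (coord_span_image (T := ~: T) freeI).
    by apply: (subvP BZ_T); rewrite memv_cap brI idB.
  by rewrite inE.
Qed.

Lemma decomposable_block_diag q p (I0 : p.-tuple V) :
  center_basis br I0 -> (forall v, central br v -> v \in derived br) ->
  (q + p)%N = \dim {:V} -> decomposable br ->
  exists (X : q.-tuple V) (I : p.-tuple V) (S : {set 'I_q}) (T : {set 'I_p}),
    [/\ XI_basis br X I, S != set0, S != setT &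
        block_diag (rep_tensor br X I) S T].
Proof.
move=> [freeI0 memZ] center_derived dimV [A [B [A0 B0 [idA idB] AB_full AB0]]].
set Z := <<I0>>%VS.
set xs := vbasis (A :\: Z) ++ vbasis (B :\: Z).
set zs := vbasis (A :&: Z) ++ vbasis (B :&: Z).
have basis_xs_zs : basis_of fullv (xs ++ zs) := basis_diffv_capv Z AB_full AB0.
have free_zs : free zs := catr_free (basis_free basis_xs_zs).
have span_zs : <<zs>>%VS = Z.
  by rewrite span_cat !(span_basis (vbasisP _)) (center_split idA idB AB_full AB0 memZ).
have size_zs : size zs == p.
  by rewrite -(eqnP free_zs) span_zs (eqnP freeI0) size_tuple.
have size_xs : size xs == q.
  have := eqnP (basis_free basis_xs_zs).
  by rewrite (span_basis basis_xs_zs) size_cat (eqP size_zs) -dimV => /addIn ->.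
pose X := Tuple size_xs; pose I := Tuple size_zs.
have centerI : center_basis br I by split=> // v; rewrite span_zs; exact: memZ.
have notinA x : x \in B -> x \in xs ++ zs -> x \notin A.
  move=> xB /(free_not0 (basis_free basis_xs_zs)); apply: contra => xA.
  by rewrite -memv0 -AB0 memv_cap xA.
exists X, I, [set i | tnth X i \in A], [set k | tnth I k \in A]; split.
- by split.
- have [x xA] := exists_mem_vbasis
    (ideal_summand_noncentral idB AB_full AB0 memZ center_derived A0).
  have /tnthP [i xi] : x \in X by rewrite mem_cat xA.
  by apply/set0Pn; exists i; rewrite inE -xi (mem_vbasis_diffv xA).
- rewrite addvC in AB_full; rewrite capvC in AB0.
  have [y yB] := exists_mem_vbasis
    (ideal_summand_noncentral idA AB_full AB0 memZ center_derived B0).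
  have /tnthP [j yj] : y \in X by rewrite mem_cat yB orbT.
  apply/negP => /eqP ST; have := in_setT j; rewrite -ST inE -yj.
  by apply/negP/notinA; rewrite ?mem_cat ?yB ?orbT // (mem_vbasis_diffv yB).
- apply: block_diag_rep_tensor centerI idA idB AB0 _ _ _.
  + move=> i; rewrite inE; case: ifP => // XiA.
    have := mem_tnth i X; rewrite mem_cat => /orP [/mem_vbasis_diffv | /mem_vbasis_diffv] //.
    by rewrite XiA.
  + rewrite span_zs -(span_basis (vbasisP (A :&: Z))).
    apply: span_sub_image => [x xZA | k /mem_vbasis_capv]; last by rewrite inE.
    by rewrite mem_cat xZA.
  + rewrite span_zs -(span_basis (vbasisP (B :&: Z))).
    apply: span_sub_image => [x xZB | k kZB]; first by rewrite mem_cat xZB orbT.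
    by rewrite !inE notinA ?(mem_vbasis_capv kZB) // mem_cat (mem_tnth k I) orbT.
Qed.

End LieAlgebra.

Unset Implicit Arguments.

Theorem lemma4 (V : vectType C) (br : V -> V -> V) (p q : nat) :
  lie_algebra br ->
  two_step br ->
  (forall v : V, central br v <-> v \in derived br) ->
  (exists I : p.-tuple V, center_basis br I) ->
  (q + p)%N = \dim {:V} ->
  decomposable br <->
  exists (X : q.-tuple V) (I : p.-tuple V) (S : {set 'I_q}) (T : {set 'I_p}),
    [/\ XI_basis br X I, S != set0, S != setT &
        block_diag (rep_tensor br X I) S T].
Proof.
move=> lieV two_stepV center_derived [I0 centerI0] dimV; split.
  apply: (decomposable_block_diag lieV two_stepV centerI0 _ dimV).
  by move=> v /center_derived.
case=> X [I [S [T [XI S0 ST diagST]]]].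
exact: (block_diag_decomposable lieV two_stepV XI S0 ST diagST).
Qed.
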